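(* Let $1\le j\le d$ and let $X$ be a $d\times d$ positive semidefinite matrix of rank at least $j$. Then there exists a $d\times d$ matrix $W\succ 0$ such that $-X\in\partial\Delta_j(W)$ and $\Gamma_j(X)=\Delta_j(W)$.
   Context: For $x\in\mathbb{R}^d_{+}$ let $x_{(i)}$ denote its $i$-th largest coordinate. For $W\succ 0$ with eigenvalues $\lambda_1\le\dots\le\lambda_d$, $\Delta_j(W)\coloneqq-\sum_{i=1}^j\ln\lambda_i$. For $x\in\mathbb{R}^d_+$, let $k$ be the unique integer with $0\le k\le j-1$ such that $x_{(k)}>\frac{1}{j-k}\sum_{i>k}x_{(i)}\ge x_{(k+1)}$ (with $x_{(0)}=\infty$; such $k$ exists and is unique), and define $\gamma_j(x)\coloneqq\sum_{i=1}^k\ln x_{(i)}+(j-k)\ln\big(\frac{1}{j-k}\sum_{i=k+1}^d x_{(i)}\big)$, with $\ln 0=-\infty$. For $X\succeq 0$ with eigenvalue vector $\lambda$, $\Gamma_j(X)\coloneqq\gamma_j(\lambda)$. The subdifferential $\partial\Delta_j(W)$ is taken in the space of symmetric matrices with the trace inner product: $Y\in\partial\Delta_j(W)$ iff $\Delta_j(Z)\ge\Delta_j(W)+\mathrm{tr}((Z-W)Y)$ for all $Z\succ 0$. *)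

(* real symmetric d x d matrices represented as nat -> nat -> R,
   only entries with indices < d are relevant. *)
From Stdlib Require Import Reals Lra Lia ClassicalEpsilon.
Open Scope R_scope.

Fixpoint sumn (n : nat) (f : nat -> R) : R :=
  match n with O => 0 | S m => sumn m f + f m end.

Definition Mat := nat -> nat -> R.

Definition mmul (d : nat) (A B : Mat) : Mat :=
  fun i j => sumn d (fun k => A i k * B k j).
Definition msub (A B : Mat) : Mat := fun i j => A i j - B i j.
Definition mopp (A : Mat) : Mat := fun i j => - A i j.
Definition mtr (d : nat) (A : Mat) : R := sumn d (fun i => A i i).

Definition sym (d : nat) (A : Mat) : Prop :=
  forall i j, (i < d)%nat -> (j < d)%nat -> A i j = A j i.

Definition quad (d : nat) (A : Mat) (x : nat -> R) : R :=
  sumn d (fun i => sumn d (fun j => x i * A i j * x j)).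

Definition PD (d : nat) (A : Mat) : Prop :=
  sym d A /\ forall x, (exists i, (i < d)%nat /\ x i <> 0) -> quad d A x > 0.

Definition PSD (d : nat) (A : Mat) : Prop :=
  sym d A /\ forall x, quad d A x >= 0.

Definition rank_ge (d : nat) (A : Mat) (r : nat) : Prop :=
  exists c : nat -> nat, (forall t, (t < r)%nat -> (c t < d)%nat) /\
    forall a : nat -> R,
      (forall i, (i < d)%nat -> sumn r (fun t => a t * A i (c t)) = 0) ->
      forall t, (t < r)%nat -> a t = 0.

Definition orthogonal (d : nat) (U : Mat) : Prop :=
  forall i j, (i < d)%nat -> (j < d)%nat ->
    sumn d (fun k => U k i * U k j) = if Nat.eqb i j then 1 else 0.

(* lam 0 <= ... <= lam (d-1) are the eigenvalues (with multiplicity) of the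
   symmetric matrix A: A = U diag(lam) U^T with U orthogonal. *)
Definition spectrum (d : nat) (A : Mat) (lam : nat -> R) : Prop :=
  (forall i, (S i < d)%nat -> lam i <= lam (S i)) /\
  exists U, orthogonal d U /\
    forall i j, (i < d)%nat -> (j < d)%nat ->
      A i j = sumn d (fun k => U i k * lam k * U j k).

Definition eigvals (d : nat) (A : Mat) : nat -> R :=
  epsilon (inhabits (fun _ : nat => 0)) (spectrum d A).

(* Delta_j(W) = - sum_{i=1}^j ln lambda_i  (lambda ascending) *)
Definition DeltaJ (d j : nat) (W : Mat) : R :=
  - sumn j (fun i => ln (eigvals d W i)).

Definition in_subdiff_Delta (d j : nat) (W Y : Mat) : Prop :=
  forall Z, PD d Z -> DeltaJ d j Z >= DeltaJ d j W + mtr d (mmul d (msub Z W) Y).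

(* gamma_j on a vector given by its decreasingly sorted coordinates
   y 1 >= y 2 >= ... >= y d  (1-indexed: y i = x_(i)). *)
Definition tailavg (d j : nat) (y : nat -> R) (k : nat) : R :=
  sumn (d - k) (fun t => y (S k + t)%nat) / INR (j - k).

Definition kcond (d j : nat) (y : nat -> R) (k : nat) : Prop :=
  (k <= j - 1)%nat /\ (k = O \/ y k > tailavg d j y k) /\
  tailavg d j y k >= y (S k).

Definition kidx (d j : nat) (y : nat -> R) : nat :=
  epsilon (inhabits O) (kcond d j y).

Definition gamma_sorted (d j : nat) (y : nat -> R) : R :=
  let k := kidx d j y in
  sumn k (fun t => ln (y (S t))) + INR (j - k) * ln (tailavg d j y k).

(* x_(i) = lambda_{d-i+1} (1-indexed) = eigvals (d - i) (0-indexed) *)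
Definition desc (d : nat) (lam : nat -> R) : nat -> R := fun i => lam (d - i)%nat.

Definition Gamma (d j : nat) (X : Mat) : R := gamma_sorted d j (desc d (eigvals d X)).

From Pilot Require Import Defs.
From Stdlib Require Import Reals Lra Lia ClassicalEpsilon Classical Wf_nat.
From mathcomp Require all_boot all_order all_algebra all_fingroup.
From mathcomp Require complex ring lra Rstruct.
Open Scope R_scope.

(* Diagonalize [X = U diag(x) U^T] with [x_1 >= ... >= x_d], and let [k] and [t]
   be the threshold index and tail average defining [Gamma_j(X)].  The witness is
   [W = U diag(1/x_1, ..., 1/x_k, 1/t, ..., 1/t) U^T]: its [j] smallest eigenvalues
   give [Delta_j(W) = Gamma_j(X)], and [tr(W X) = j].  For [Z > 0] with ascending
   eigenvalues [mu], a von Neumann-type trace inequality gives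
   [tr(Z X) >= sum_l mu_l x_l], and [ln(a b) <= a b - 1] applied termwise, with the
   [k] largest [x_l] and then with [t], gives
   [sum_l mu_l x_l - sum_(l<j) ln mu_l >= j + Delta_j(W)], which is the subgradient
   inequality for [-X] at [W]. *)

Lemma sumn_ext n f g : (forall i, (i < n)%nat -> f i = g i) -> sumn n f = sumn n g.
Proof.
induction n as [|n IH]; intros H; simpl; [reflexivity|].
rewrite IH by (intros; apply H; lia). now rewrite H by lia.
Qed.

Lemma sumn_0 n : sumn n (fun _ => 0) = 0.
Proof. induction n; simpl; lra. Qed.

Lemma sumn_const n c : sumn n (fun _ => c) = INR n * c.
Proof. induction n; simpl sumn; [simpl; lra | rewrite IHn, S_INR; lra]. Qed.

Lemma sumn_plus n f g : sumn n (fun i => f i + g i) = sumn n f + sumn n g.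
Proof. induction n; simpl; lra. Qed.

Lemma sumn_minus n f g : sumn n (fun i => f i - g i) = sumn n f - sumn n g.
Proof. induction n; simpl; lra. Qed.

Lemma sumn_opp n f : sumn n (fun i => - f i) = - sumn n f.
Proof. induction n; simpl; lra. Qed.

Lemma sumn_scal_l n c f : sumn n (fun i => c * f i) = c * sumn n f.
Proof. induction n; simpl; lra. Qed.

Lemma sumn_scal_r n c f : sumn n (fun i => f i * c) = sumn n f * c.
Proof. induction n; simpl; lra. Qed.

Lemma sumn_swap n m f :
  sumn n (fun i => sumn m (fun j => f i j)) = sumn m (fun j => sumn n (fun i => f i j)).
Proof.
induction n as [|n IH]; simpl.
- now rewrite sumn_0.
- now rewrite IH, <- sumn_plus.
Qed.

Lemma sumn_mul_sumn n p q f g :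
  sumn n (fun m => sumn p (fun a => f a m) * sumn q (fun b => g b m)) =
  sumn p (fun a => sumn q (fun b => sumn n (fun m => f a m * g b m))).
Proof.
transitivity (sumn n (fun m => sumn p (fun a => sumn q (fun b => f a m * g b m)))).
- apply sumn_ext; intros m _. rewrite <- sumn_scal_r.
  apply sumn_ext; intros a _. now rewrite <- sumn_scal_l.
- rewrite sumn_swap. apply sumn_ext; intros a _. now rewrite sumn_swap.
Qed.

Lemma sumn_le n f g : (forall i, (i < n)%nat -> f i <= g i) -> sumn n f <= sumn n g.
Proof.
induction n as [|n IH]; intros H; simpl; [lra|].
assert (f n <= g n) by (apply H; lia).
assert (sumn n f <= sumn n g) by (apply IH; intros; apply H; lia).
lra.
Qed.

Lemma sumn_nonneg n f : (forall i, (i < n)%nat -> 0 <= f i) -> 0 <= sumn n f.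
Proof. intros H. rewrite <- (sumn_0 n). now apply sumn_le. Qed.

Lemma sumn_pos n f : (forall i, (i < n)%nat -> 0 <= f i) ->
  (exists i, (i < n)%nat /\ 0 < f i) -> 0 < sumn n f.
Proof.
induction n as [|n IH]; intros H [i [Hi Hfi]]; [lia|simpl].
destruct (Nat.eq_dec i n) as [->|Hin].
- assert (0 <= sumn n f) by (apply sumn_nonneg; intros; apply H; lia). lra.
- assert (0 < sumn n f) by (apply IH; [intros; apply H; lia | exists i; split; [lia|auto]]).
  assert (0 <= f n) by (apply H; lia). lra.
Qed.

Lemma sumn_add a b f : sumn (a + b) f = sumn a f + sumn b (fun i => f (a + i)%nat).
Proof.
induction b as [|b IH]; simpl.
- rewrite Nat.add_0_r; lra.
- rewrite Nat.add_succ_r; simpl; rewrite IH; lra.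
Qed.

Lemma sumn_shift n f : sumn (S n) f = f O + sumn n (fun i => f (S i)).
Proof. replace (S n) with (1 + n)%nat by lia. rewrite sumn_add. simpl. lra. Qed.

Lemma sumn_rev n f : sumn n (fun i => f (n - S i)%nat) = sumn n f.
Proof.
induction n as [|n IH]; [reflexivity|].
rewrite sumn_shift, Nat.sub_1_r; simpl (sumn (S n) f); rewrite <- IH.
rewrite (sumn_ext n _ (fun i => f (n - S i)%nat)) by (intros; f_equal; lia).
simpl; lra.
Qed.

Lemma sumn_prefix_le m d f :
  (m <= d)%nat -> (forall i, (i < d)%nat -> 0 <= f i) -> sumn m f <= sumn d f.
Proof.
intros Hm Hf. replace d with (m + (d - m))%nat by lia. rewrite sumn_add.
assert (0 <= sumn (d - m) (fun i => f (m + i)%nat)) by (apply sumn_nonneg; intros; apply Hf; lia).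
lra.
Qed.

Lemma sumn_truncate d m g : (m <= d)%nat ->
  sumn d (fun l => if Nat.ltb l m then g l else 0) = sumn m g.
Proof.
intros Hm. replace d with (m + (d - m))%nat by lia. rewrite sumn_add.
rewrite (sumn_ext m _ g), (sumn_ext (d - m) _ (fun _ => 0)), sumn_0; [lra| |].
- intros i _. destruct (Nat.ltb_spec (m + i) m); [lia|reflexivity].
- intros i Hi. destruct (Nat.ltb_spec i m); [reflexivity|lia].
Qed.

Lemma sumn_kronecker n i f : (i < n)%nat ->
  sumn n (fun k => (if Nat.eqb i k then 1 else 0) * f k) = f i.
Proof.
induction n as [|n IH]; intros Hi; [lia|simpl].
destruct (Nat.eq_dec i n) as [->|Hin].
- rewrite Nat.eqb_refl, (sumn_ext n _ (fun _ => 0)), sumn_0; [lra|].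
  intros k Hk. destruct (Nat.eqb_spec n k); [lia|lra].
- rewrite IH by lia. destruct (Nat.eqb_spec i n); [lia|lra].
Qed.

(** * The real spectral theorem *)

Definition orth_rows (d : nat) (U : Mat) : Prop :=
  forall i j, (i < d)%nat -> (j < d)%nat ->
    sumn d (fun k => U i k * U j k) = if Nat.eqb i j then 1 else 0.

Module RealSpectral.
Import mathcomp.boot.all_boot mathcomp.order.all_order mathcomp.algebra.all_algebra.
Import mathcomp.fingroup.all_fingroup mathcomp.real_closed.complex.
Import mathcomp.algebra_tactics.ring mathcomp.algebra_tactics.lra mathcomp.reals_stdlib.Rstruct.
Import Order.TTheory GRing.Theory Num.Theory.
Set Implicit Arguments. Unset Strict Implicit. Unset Printing Implicit Defensive.
Local Open Scope ring_scope.

Section SymmetricMatrices.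
Variable R : rcfType.

Lemma Re_sum (I : finType) (F : I -> R[i]) :
  complex.Re (\sum_i F i) = \sum_i complex.Re (F i).
Proof. by apply: (big_morph (@complex.Re R)) => // -[a b] [c d]. Qed.

Lemma Im_sum (I : finType) (F : I -> R[i]) :
  complex.Im (\sum_i F i) = \sum_i complex.Im (F i).
Proof. by apply: (big_morph (@complex.Im R)) => // -[a b] [c d]. Qed.

Lemma dotmx_ge0 m (u : 'rV[R]_m) : 0 <= (u *m u^T) 0 0.
Proof. by rewrite !mxE; apply: sumr_ge0 => k _; rewrite mxE -expr2 sqr_ge0. Qed.

Lemma dotmx_gt0 m (u : 'rV[R]_m) : u != 0 -> 0 < (u *m u^T) 0 0.
Proof.
move=> u0; rewrite lt_def dotmx_ge0 andbT; apply: contra u0; rewrite mxE.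
have u2_ge0 k : true -> 0 <= u 0 k * u^T k 0 by rewrite mxE -expr2 sqr_ge0.
move=> /eqP /(psumr_eq0P u2_ge0) u2_0; apply/eqP/rowP => j; apply/eqP.
by rewrite mxE -sqrf_eq0 expr2; have := u2_0 j isT; rewrite mxE => ->.
Qed.

(* The real and imaginary parts [a], [b] of a complex eigenvector satisfy
   [a A = al a - bl b] and [b A = bl a + al b]; symmetry of [A] forces [bl = 0]. *)
Lemma symmetric_eigenvector n (A : 'M[R]_n.+1) : A^T = A ->
  exists (v : 'rV[R]_n.+1) (al : R), v *m A = al *: v /\ v != 0.
Proof.
move=> sA; pose AC := map_mx (real_complex R) A.
have [l] : exists l, root (char_poly AC) l.
  by apply/closed_rootP; rewrite size_char_poly.
rewrite -eigenvalue_root_char => /eigenvalueP[w Hw w0].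
pose a := map_mx (@complex.Re R) w; pose b := map_mx (@complex.Im R) w.
case El : l => [al bl].
have Ha : a *m A = al *: a - bl *: b.
  apply/matrixP => i j; have := congr1 (fun M : 'M[R[i]]_(1, n.+1) => complex.Re (M i j)) Hw.
  rewrite /= !mxE El Re_sum => H.
  transitivity (complex.Re ((al +i* bl) * w i j))%C; last by case: (w i j).
  rewrite -H.
  by apply: eq_bigr => k _; rewrite /a /AC !mxE; case: (w i k) => ? ? /=; rewrite mulr0 subr0.
have Hb : b *m A = bl *: a + al *: b.
  apply/matrixP => i j; have := congr1 (fun M : 'M[R[i]]_(1, n.+1) => complex.Im (M i j)) Hw.
  rewrite /= !mxE El Im_sum => H.
  transitivity (complex.Im ((al +i* bl) * w i j))%C; last by case: (w i j) => ? ? /=; rewrite addrC.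
  rewrite -H.
  by apply: eq_bigr => k _; rewrite /b /AC !mxE; case: (w i k) => ? ? /=; rewrite mulr0 add0r.
have ab0 : (a != 0) || (b != 0).
  apply: contraR w0; rewrite negb_or !negbK => /andP[/eqP a0 /eqP b0].
  apply/eqP/matrixP => i j.
  move: (congr1 (fun M : 'rV_n.+1 => M i j) a0) (congr1 (fun M : 'rV_n.+1 => M i j) b0).
  by rewrite /a /b !mxE; case: (w i j) => x y /= -> ->.
have bl0 : bl = 0.
  have key : (a *m A) *m b^T = a *m (b *m A)^T by rewrite trmx_mul sA mulmxA.
  rewrite Ha Hb linearD /= !linearZ /= mulmxDl mulmxDr -!scalemxAl -!scalemxAr mulNmx in key.
  have /(congr1 (fun M : 'M_1 => M 0 0)) := key; rewrite !mxE => e.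
  have pos : 0 < (a *m a^T) 0 0 + (b *m b^T) 0 0.
    by case/orP: ab0 => /dotmx_gt0 ?; [apply: ltr_wpDr|apply: ltr_wpDl]; rewrite ?dotmx_ge0.
  have : bl * ((a *m a^T) 0 0 + (b *m b^T) 0 0) = 0.
    by move: e; rewrite !mxE => e; rewrite ?mxE mulrDr; lra.
  by move/eqP; rewrite mulf_eq0 (gt_eqF pos) orbF => /eqP.
rewrite bl0 scale0r subr0 in Ha; rewrite bl0 scale0r add0r in Hb.
by case/orP: ab0 => ?; [exists a, al | exists b, al].
Qed.

Lemma symmetric_unit_eigenvector n (A : 'M[R]_n.+1) : A^T = A ->
  exists (u : 'rV[R]_n.+1) (al : R), u *m A = al *: u /\ u *m u^T = 1%:M.
Proof.
move=> sA; have [v [al [Hv v0]]] := symmetric_eigenvector sA.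
have s_gt0 := dotmx_gt0 v0; set s := (v *m v^T) 0 0 in s_gt0.
exists ((Num.sqrt s)^-1 *: v), al; split; first by rewrite -scalemxAl Hv !scalerA mulrC.
rewrite linearZ /= -scalemxAl -scalemxAr scalerA.
apply/matrixP => i j; rewrite !ord1 [LHS]mxE -/s [RHS]mxE eqxx.
by rewrite -invrM ?unitf_gt0 ?sqrtr_gt0 // -expr2 sqr_sqrtr ?ltW // mulVf ?gt_eqF.
Qed.

(* The reflection across the hyperplane orthogonal to [w = u - e0]. *)
Lemma householder_reflection n (u : 'rV[R]_n.+1) : u *m u^T = 1%:M ->
  exists H : 'M[R]_n.+1, [/\ H^T = H, H *m H = 1%:M & delta_mx 0 0 *m H = u].
Proof.
move=> uu; set e0 := delta_mx 0 0 : 'rV[R]_n.+1.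
pose w := u - e0; have wE : w = u - e0 by [].
set c := (w *m w^T) 0 0; set k := 2 / c.
exists (1%:M - k *: (w^T *m w)).
have ww : w *m w^T = c%:M by rewrite [LHS]mx11_scalar.
have e0e0 : e0 *m e0^T = 1%:M.
  apply/matrixP => i j; rewrite !ord1 !mxE (bigD1 0) //= big1 ?addr0; last first.
    by move=> l /negbTE l0; rewrite !mxE l0 andbF mul0r.
  by rewrite !mxE eqxx mulr1.
have ue0 : u *m e0^T = (u 0 0)%:M.
  apply/matrixP => i j; rewrite !ord1 !mxE (bigD1 0) //= big1 ?addr0; last first.
    by move=> l /negbTE l0; rewrite !mxE l0 andbF mulr0.
  by rewrite !mxE eqxx mulr1 mulr1n.
have e0u : e0 *m u^T = (u 0 0)%:M.
  by rewrite -[e0 *m u^T]trmxK trmx_mul trmxK ue0 tr_scalar_mx.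
have cE : c = - 2 * w 0 0.
  have : w *m w^T = (2 - 2 * u 0 0)%:M.
    rewrite wE linearB /= mulmxBl !mulmxBr uu ue0 e0u e0e0.
    by apply/matrixP => i j; rewrite !ord1 !mxE /=; ring.
  move/(congr1 (fun M : 'M_1 => M 0 0)); rewrite -/c => ->.
  by rewrite [in LHS]mxE eqxx mulr1n wE !mxE !eqxx /=; ring.
have e0w : e0 *m w^T = (w 0 0)%:M.
  by rewrite wE linearB /= mulmxBr e0u e0e0; apply/matrixP => i j; rewrite !ord1 !mxE !eqxx.
clearbody w; split.
- by rewrite linearB /= trmx1 linearZ /= trmx_mul trmxK.
- have PP : (w^T *m w) *m (w^T *m w) = c *: (w^T *m w).
    by rewrite mulmxA -[w^T *m w *m w^T]mulmxA ww mul_mx_scalar scalemxAl.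
  have kk : k * k * c = 2 * k.
    have [c0|c0] := eqVneq c 0; first by rewrite /k c0 invr0 !mulr0.
    by rewrite /k; field.
  rewrite mulmxBl !mulmxBr mulmx1 mul1mx -!scalemxAl -!scalemxAr PP scalerA.
  rewrite ?mul1mx mulmx1 scalerA kk; set P := w^T *m w; clearbody P.
  by apply/matrixP => i j; rewrite !mxE; ring.
- rewrite mulmxBr mulmx1 -scalemxAr mulmxA e0w mul_scalar_mx scalerA.
  have [c0|c0] := eqVneq c 0.
    have w0 : w = 0 by apply/eqP/negPn/negP => /dotmx_gt0; rewrite -/c c0 ltxx.
    by rewrite w0 scaler0 subr0; move: w0; rewrite wE => /eqP; rewrite subr_eq0 => /eqP.
  have w00 : w 0 0 != 0 by apply: contra c0 => /eqP w0; rewrite cE w0 mulr0.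
  have -> : k * w 0 0 = -1 by rewrite /k cE; field.
  by rewrite scaleN1r opprK wE addrC subrK.
Qed.

Lemma symmetric_deflation n (A : 'M[R]_(1 + n)) : A^T = A ->
  exists (H : 'M[R]_(1 + n)) (al : R) (A' : 'M[R]_n),
    [/\ H^T = H, H *m H = 1%:M, A'^T = A' & H *m A *m H = block_mx al%:M 0 0 A'].
Proof.
move=> sA; have [u [al [Hu uu]]] := symmetric_unit_eigenvector sA.
have [H [HT HH e0H]] := householder_reflection uu.
set B := H *m A *m H.
have BT : B^T = B by rewrite /B !trmx_mul HT sA mulmxA.
have e0B : (delta_mx 0 0 : 'rV[R]_(1 + n)) *m B = al *: delta_mx 0 0.
  by rewrite /B !mulmxA e0H Hu -scalemxAl -e0H -mulmxA HH mulmx1.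
have B0 (i j : 'I_(1 + n)) : i = 0 :> nat -> B i j = al * (j == 0 :> nat)%:R.
  move=> i0; have -> : i = 0 by apply: val_inj.
  by have := congr1 (fun M : 'rV_(1 + n) => M 0 j) e0B; rewrite -rowE !mxE.
exists H, al, (drsubmx (B : 'M_(1 + n))); split => //; first by rewrite trmx_drsub BT.
rewrite -/B; clearbody B.
rewrite -[LHS](@submxK _ 1 n 1 n B); congr block_mx; apply/matrixP => i j.
- by rewrite !ord1 !mxE B0 // mulr1.
- by rewrite !ord1 !mxE B0 // mulr0.
- by rewrite !ord1 !mxE -BT mxE B0 // mulr0.
Qed.

Lemma symmetric_diagonalization n (A : 'M[R]_n) : A^T = A ->
  exists (P : 'M[R]_n) (D : 'rV[R]_n), P^T *m P = 1%:M /\ A = P *m diag_mx D *m P^T.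
Proof.
elim: n A => [|n IH] A sA; first by exists 1%:M, 0; split; apply/matrixP => -[].
have [H [al [A' [HT HH sA' HAH]]]] := symmetric_deflation sA.
have [P' [D' [PP' AE']]] := IH A' sA'.
pose Q : 'M_(1 + n) := block_mx 1%:M 0 0 P'.
have QQ : Q^T *m Q = 1%:M.
  by rewrite tr_block_mx !trmx0 trmx1 mulmx_block !mulmx0 !mul0mx !mulmx1 !addr0 !add0r PP'
    -scalar_mx_block.
have QDQ : Q *m diag_mx (row_mx al%:M D') *m Q^T = block_mx al%:M 0 0 A'.
  have diag11 : diag_mx (al%:M : 'rV_1) = al%:M by apply/matrixP => i j; rewrite !ord1 !mxE.
  rewrite diag_mx_row diag11 tr_block_mx !trmx0 trmx1.
  by rewrite !mulmx_block !mulmx0 !mul0mx !mulmx1 !mul1mx !addr0 !add0r AE' mul0mx.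
exists (H *m Q), (row_mx al%:M D'); split.
  by rewrite trmx_mul HT mulmxA -[Q^T *m H *m H]mulmxA HH mulmx1.
have -> : A = H *m (H *m A *m H) *m H by rewrite !mulmxA HH mul1mx -mulmxA HH mulmx1.
by rewrite HAH -QDQ trmx_mul HT !mulmxA.
Qed.

Lemma sorting_perm n (f : 'I_n -> R) :
  exists s : {perm 'I_n}, forall i j : 'I_n, (i <= j)%N -> f (s i) <= f (s j).
Proof.
pose t := [tuple f i | i < n].
have /tuple_permP [s Hs] : perm_eq (sort_tuple <=%R t) t by rewrite perm_sort.
exists s => i j ij.
have srt : sorted <=%R (sort_tuple <=%R t) by apply: sort_sorted => x y; apply: le_total.
have fs k : f (s k) = nth 0 (sort_tuple <=%R t) k.
  by rewrite Hs -tnth_nth tnth_mktuple tnth_map tnth_ord_tuple.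
by rewrite !fs; apply: (sorted_leq_nth le_trans lexx) => //; rewrite inE size_tuple.
Qed.

Lemma symmetric_sorted_diagonalization n (A : 'M[R]_n) : A^T = A ->
  exists (P : 'M[R]_n) (lam : 'I_n -> R),
  [/\ forall i j : 'I_n, (i <= j)%N -> lam i <= lam j,
      forall i j, \sum_k P k i * P k j = (i == j)%:R
    & forall i j, A i j = \sum_k P i k * lam k * P j k].
Proof.
move=> sA; have [P [D [PP AE]]] := symmetric_diagonalization sA.
have [s Hs] := sorting_perm (fun k => D 0 k).
exists (\matrix_(i, k) P i (s k)), (fun k => D 0 (s k)); split => // [i j|i j].
  have := congr1 (fun M : 'M_n => M (s i) (s j)) PP.
  by rewrite !mxE (inj_eq (@perm_inj _ s)) => <-; apply: eq_bigr => k _; rewrite !mxE.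
rewrite AE mxE (reindex_inj (@perm_inj _ s)) /=.
apply: eq_bigr => k _; rewrite !mxE (bigD1 (s k)) //= big1 ?addr0.
  by rewrite !mxE eqxx mulr1n.
by move=> l /negbTE lk; rewrite !mxE lk mulr0n mulr0.
Qed.

Lemma orthonormal_rows n (P : 'M[R]_n) :
  (forall i j, \sum_k P k i * P k j = (i == j)%:R) ->
  forall i j, \sum_k P i k * P j k = (i == j)%:R.
Proof.
move=> Pcols; have /mulmx1C PP : P^T *m P = 1%:M.
  by apply/matrixP => i j; rewrite !mxE -Pcols; apply: eq_bigr => k _; rewrite mxE.
move=> i j; have := congr1 (fun M : 'M_n => M i j) PP.
by rewrite !mxE => <-; apply: eq_bigr => k _; rewrite mxE.
Qed.

Lemma left_kernel_nonzero m n (B : 'M[R]_(m, n)) : (n < m)%N ->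
  exists2 a : 'rV[R]_m, a != 0 & a *m B = 0.
Proof.
move=> nm; have K0 : kermx B != 0.
  by rewrite -mxrank_eq0 mxrank_ker subn_eq0 -ltnNge (leq_ltn_trans (rank_leq_col B)).
have [i Bi0] : exists i, row i (kermx B) != 0.
  apply/existsP; apply: contraR K0 => /existsPn Bi0; apply/eqP/row_matrixP => i.
  by apply/eqP; rewrite row0; move: (Bi0 i); rewrite negbK.
by exists (row i (kermx B)); rewrite // -row_mul mulmx_ker row0.
Qed.

End SymmetricMatrices.

Lemma sumn_bigop n (f : nat -> R) : Defs.sumn n f = \sum_(i < n) f i.
Proof. by elim: n => [|n IH]; rewrite ?big_ord0 // big_ord_recr /= -IH. Qed.

Lemma if_natr (b : bool) : (if b then 1 else 0) = b%:R :> R.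
Proof. by case: b. Qed.

Lemma eqb_inord n (i j : nat) : (i < n.+1)%N -> (j < n.+1)%N ->
  Nat.eqb i j = ((inord i : 'I_n.+1) == inord j).
Proof.
move=> Hi Hj; apply/idP/idP; first by move/Nat.eqb_spec => ->.
by move/eqP/(congr1 val); rewrite /= !inordK // => ->; apply/Nat.eqb_spec.
Qed.

Lemma spectrum_exists d A : sym d A -> exists lam, spectrum d A lam.
Proof.
case: d => [|n] sA.
  exists (fun _ => 0%R); split => [i|]; first by lia.
  by exists (fun _ _ => 0%R); split => i j; lia.
pose M : 'M[R]_n.+1 := \matrix_(i, j) A i j.
have MT : M^T = M by apply/matrixP => i j; rewrite !mxE sA //; apply/ssrnat.ltP.
have [P [lam [lam_sorted P_orth AE]]] := symmetric_sorted_diagonalization MT.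
exists (fun k => lam (inord k)); split.
  by move=> i /ssrnat.ltP Hi; apply/RleP/lam_sorted; rewrite !inordK // ltnW.
exists (fun i k => P (inord i) (inord k)); split.
  move=> i j /ssrnat.ltP Hi /ssrnat.ltP Hj; rewrite sumn_bigop (eqb_inord Hi Hj) if_natr.
  by rewrite -P_orth; apply: eq_bigr => k _; rewrite inord_val.
move=> i j /ssrnat.ltP Hi /ssrnat.ltP Hj; rewrite sumn_bigop.
have := AE (inord i) (inord j); rewrite mxE !inordK // => ->.
by apply: eq_bigr => k _; rewrite inord_val.
Qed.

Lemma orthogonal_rows d U : Defs.orthogonal d U -> orth_rows d U.
Proof.
case: d => [|n] HU i j Hi Hj; first by lia.
pose M : 'M[R]_n.+1 := \matrix_(i, j) U i j.
have M_orth (a b : 'I_n.+1) : \sum_k M k a * M k b = (a == b)%:R.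
  have := HU a b (ssrnat.ltP (ltn_ord a)) (ssrnat.ltP (ltn_ord b)).
  rewrite sumn_bigop (eqb_inord (ltn_ord a) (ltn_ord b)) !inord_val if_natr.
  by move=> <-; apply: eq_bigr => k _; rewrite !mxE.
move/ssrnat.ltP: Hi => Hi; move/ssrnat.ltP: Hj => Hj.
rewrite sumn_bigop (eqb_inord Hi Hj) if_natr -(orthonormal_rows M_orth).
by apply: eq_bigr => k _; rewrite !mxE !inordK.
Qed.

Local Close Scope ring_scope.
Local Open Scope R_scope.

Lemma left_kernel_exists m n (B : Mat) : (n < m)%coq_nat ->
  exists a : nat -> R, (exists t, (t < m)%coq_nat /\ a t <> 0) /\
    forall l, (l < n)%coq_nat -> Defs.sumn m (fun t => a t * B t l) = 0.
Proof.
Local Open Scope ring_scope.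
case: m => [|m] Hnm; first by lia.
pose B' : 'M[R]_(m.+1, n) := \matrix_(t, l) B t l.
have [a a0 aB] : exists2 a : 'rV_m.+1, a != 0 & a *m B' = 0.
  by apply: left_kernel_nonzero; apply/ssrnat.ltP.
exists (fun t => a 0 (inord t)); split.
  have /existsP[t0 /eqP at0] : [exists t, a 0 t != 0].
    apply: contraR a0 => /existsPn a_0; apply/eqP/rowP => t.
    by apply/eqP; rewrite mxE; move: (a_0 t); rewrite negbK.
  by exists t0; split; [apply/ssrnat.ltP | rewrite inord_val].
move=> l /ssrnat.ltP Hl; rewrite sumn_bigop.
have := congr1 (fun M : 'rV[R]_n => M 0 (Ordinal Hl)) aB; rewrite !mxE => aB_l.
by rewrite -[RHS]aB_l; apply: eq_bigr => t _; rewrite inord_val !mxE.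
Qed.

End RealSpectral.

(** * Spectral inequalities *)

Definition diag_decomp (d : nat) (A U : Mat) (a : nat -> R) : Prop :=
  forall i j, (i < d)%nat -> (j < d)%nat -> A i j = sumn d (fun k => U i k * a k * U j k).

Definition diag_mat (d : nat) (U : Mat) (a : nat -> R) : Mat :=
  fun i j => sumn d (fun k => U i k * a k * U j k).

Definition dot (d : nat) (u v : nat -> R) : R := sumn d (fun i => u i * v i).

Definition col (U : Mat) (m : nat) : nat -> R := fun i => U i m.

Definition sorted_on (d : nat) (a : nat -> R) : Prop :=
  forall i j, (i <= j)%nat -> (j < d)%nat -> a i <= a j.

Lemma sorted_on_succ d a : (forall i, (S i < d)%nat -> a i <= a (S i)) -> sorted_on d a.
Proof.
intros H i j Hij Hj. induction Hij as [|m Hij IH]; [lra|].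
assert (a m <= a (S m)) by (apply H; lia). specialize (IH ltac:(lia)). lra.
Qed.

Lemma diag_decomp_sym d A U a : diag_decomp d A U a -> sym d A.
Proof. intros HA i j Hi Hj. rewrite !HA by auto. apply sumn_ext; intros; ring. Qed.

Lemma dot_comm d u v : dot d u v = dot d v u.
Proof. apply sumn_ext; intros; ring. Qed.

Lemma quad_diag_decomp d A U a u : diag_decomp d A U a ->
  quad d A u = sumn d (fun m => a m * (dot d u (col U m) * dot d u (col U m))).
Proof.
intros HA. unfold dot, col.
transitivity (sumn d (fun m => sumn d (fun x => u x * U x m * a m) * sumn d (fun y => u y * U y m))).
- rewrite sumn_mul_sumn. apply sumn_ext; intros x Hx. apply sumn_ext; intros y Hy.
  rewrite HA by auto. rewrite <- sumn_scal_l, <- sumn_scal_r. apply sumn_ext; intros; ring.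
- apply sumn_ext; intros m _. rewrite sumn_scal_r. ring.
Qed.

Lemma parseval d U v w : orth_rows d U ->
  sumn d (fun m => dot d v (col U m) * dot d w (col U m)) = dot d v w.
Proof.
intros HU. unfold dot, col. rewrite sumn_mul_sumn. apply sumn_ext; intros x Hx.
transitivity (sumn d (fun y => (if Nat.eqb x y then 1 else 0) * (v x * w y))).
- apply sumn_ext; intros y Hy. rewrite <- HU by auto. rewrite <- sumn_scal_r.
  apply sumn_ext; intros; ring.
- now rewrite sumn_kronecker.
Qed.

Lemma quad_col d A V b i : diag_decomp d A V b -> orthogonal d V -> (i < d)%nat ->
  quad d A (col V i) = b i.
Proof.
intros HA HV Hi. rewrite (quad_diag_decomp d A V b) by auto.
rewrite <- (sumn_kronecker d i b) by auto. apply sumn_ext; intros m Hm.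
unfold dot, col. rewrite HV by auto. destruct (Nat.eqb i m); ring.
Qed.

Lemma sorted_weighted_sum_ge d m a c : (m <= d)%nat -> sorted_on d a ->
  (forall l, (l < d)%nat -> 0 <= c l <= 1) -> sumn d c = INR m ->
  sumn d (fun l => a l * c l) >= sumn m a.
Proof.
intros Hm Ha Hc Hs. set (th := a (m - 1)%nat).
assert (E : sumn d (fun l => a l * c l) >=
            sumn d (fun l => th * c l + (if Nat.ltb l m then a l - th else 0))).
{ apply Rle_ge, sumn_le. intros l Hl. specialize (Hc l Hl).
  destruct (Nat.ltb_spec l m).
  - assert (a l <= th) by (apply Ha; lia). nra.
  - assert (th <= a l) by (apply Ha; lia). nra. }
rewrite sumn_plus, sumn_scal_l, sumn_truncate, sumn_minus, sumn_const, Hs in E by auto. lra.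
Qed.

Lemma ky_fan_min d A U a V m : diag_decomp d A U a -> orthogonal d U -> sorted_on d a ->
  orthogonal d V -> (m <= d)%nat ->
  sumn m (fun i => quad d A (col V i)) >= sumn m a.
Proof.
intros HA HU Ha HV Hm.
assert (HUr := RealSpectral.orthogonal_rows HU). assert (HVr := RealSpectral.orthogonal_rows HV).
set (c := fun l => sumn m (fun i => dot d (col V i) (col U l) * dot d (col V i) (col U l))).
replace (sumn m (fun i => quad d A (col V i))) with (sumn d (fun l => a l * c l)).
2:{ rewrite (sumn_ext m _ (fun i => sumn d (fun l =>
      a l * (dot d (col V i) (col U l) * dot d (col V i) (col U l)))))
      by (intros; apply quad_diag_decomp; auto).
    rewrite sumn_swap. apply sumn_ext; intros l _. unfold c. now rewrite sumn_scal_l. }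
apply sorted_weighted_sum_ge; auto.
- intros l Hl. split.
  + apply sumn_nonneg. intros. apply Rle_0_sqr.
  + assert (Hl1 : dot d (col U l) (col U l) = 1) by (unfold dot, col; rewrite HU, Nat.eqb_refl; auto).
    rewrite <- Hl1, <- (parseval d V (col U l) (col U l)) by auto.
    unfold c. rewrite (sumn_ext m _ (fun i => dot d (col U l) (col V i) * dot d (col U l) (col V i)))
      by (intros; rewrite dot_comm; auto).
    apply sumn_prefix_le; auto. intros. apply Rle_0_sqr.
- unfold c. rewrite sumn_swap, <- (Rmult_1_r (INR m)), <- sumn_const.
  apply sumn_ext; intros i Hi. rewrite parseval by auto.
  unfold dot, col. rewrite HV, Nat.eqb_refl; auto; lia.
Qed.

Lemma diag_decomp_unique d A U a V b :
  diag_decomp d A U a -> orthogonal d U -> sorted_on d a ->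
  diag_decomp d A V b -> orthogonal d V -> sorted_on d b ->
  forall i, (i < d)%nat -> a i = b i.
Proof.
intros HA HU Ha HB HV Hb.
assert (Prefix : forall m, (m <= d)%nat -> sumn m a = sumn m b).
{ intros m Hm.
  pose proof (ky_fan_min d A U a V m HA HU Ha HV Hm).
  pose proof (ky_fan_min d A V b U m HB HV Hb HU Hm).
  rewrite (sumn_ext m _ b) in * by (intros; apply (quad_col d A V b); auto; lia).
  rewrite (sumn_ext m _ a) in * by (intros; apply (quad_col d A U a); auto; lia).
  lra. }
intros i Hi. pose proof (Prefix (S i) Hi). pose proof (Prefix i ltac:(lia)). simpl in *. lra.
Qed.

(* Summation by parts. *)
Lemma abel_sum_nonneg d mu e : sorted_on d mu ->
  (forall m, (m <= d)%nat -> sumn m e <= 0) -> sumn d e = 0 ->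
  sumn d (fun l => mu l * e l) >= 0.
Proof.
intros Hmu He Hd. destruct d as [|d]; [simpl; lra|].
assert (Partial : forall n, (n <= d)%nat -> sumn n (fun l => mu l * e l) >= mu n * sumn n e).
{ induction n as [|n IH]; intros Hn; simpl; [lra|].
  specialize (IH ltac:(lia)).
  assert (mu n <= mu (S n)) by (apply Hmu; lia).
  assert (sumn n e + e n <= 0) by (apply (He (S n)); lia). nra. }
simpl in *. specialize (Partial d (le_n d)). nra.
Qed.

Lemma mtr_mul_diag_decomp d Z V mu X : diag_decomp d Z V mu ->
  mtr d (mmul d Z X) = sumn d (fun l => mu l * quad d X (col V l)).
Proof.
intros HZ. unfold mtr, mmul, quad, col.
transitivity (sumn d (fun i => sumn d (fun k => sumn d (fun l => mu l * (V k l * X k i * V i l))))).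
- apply sumn_ext; intros i Hi; apply sumn_ext; intros k Hk. rewrite HZ by auto.
  rewrite <- sumn_scal_r. apply sumn_ext; intros; ring.
- rewrite (sumn_ext d _ (fun i => sumn d (fun l => sumn d (fun k => mu l * (V k l * X k i * V i l)))))
    by (intros; apply sumn_swap).
  rewrite sumn_swap. apply sumn_ext; intros l _. rewrite <- sumn_scal_l, sumn_swap.
  apply sumn_ext; intros k _. rewrite <- sumn_scal_l. apply sumn_ext; intros; ring.
Qed.

Lemma mtr_mul_sub_opp d Z W X :
  mtr d (mmul d (msub Z W) (mopp X)) = mtr d (mmul d W X) - mtr d (mmul d Z X).
Proof.
unfold mtr, mmul, msub, mopp. rewrite <- sumn_minus. apply sumn_ext; intros.
rewrite <- sumn_minus. apply sumn_ext; intros. ring.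
Qed.

(* A von Neumann-type trace inequality: Ky Fan's minimum principle for [-X] in
   the eigenbasis of [Z], then summation by parts against the sorted [mu]. *)
Lemma mtr_mul_ge d X U x Z V mu :
  diag_decomp d X U x -> orthogonal d U -> sorted_on d (fun i => - x i) ->
  diag_decomp d Z V mu -> orthogonal d V -> sorted_on d mu ->
  mtr d (mmul d Z X) >= sumn d (fun l => mu l * x l).
Proof.
intros HX HU Hx HZ HV Hmu.
rewrite (mtr_mul_diag_decomp d Z V mu X HZ).
set (a := fun l => quad d X (col V l)).
assert (HmX : diag_decomp d (mopp X) U (fun m => - x m)).
{ intros i j Hi Hj. unfold mopp. rewrite HX, <- sumn_opp by auto. apply sumn_ext; intros; ring. }
assert (Partial : forall m, (m <= d)%nat -> sumn m (fun l => a l - x l) <= 0).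
{ intros m Hm. pose proof (ky_fan_min d (mopp X) U (fun m => - x m) V m HmX HU Hx HV Hm) as KF.
  rewrite (sumn_ext m _ (fun i => - a i)), !sumn_opp in KF.
  - rewrite sumn_minus. lra.
  - intros. unfold a, quad, mopp. rewrite <- sumn_opp. apply sumn_ext; intros.
    rewrite <- sumn_opp. apply sumn_ext; intros; ring. }
assert (Total : sumn d (fun l => a l - x l) = 0).
{ rewrite sumn_minus. unfold a.
  rewrite (sumn_ext d _ (fun l => sumn d (fun m => x m * (dot d (col U m) (col V l) * dot d (col U m) (col V l))))).
  - rewrite sumn_swap, (sumn_ext d _ x); [lra|]. intros m Hm.
    rewrite sumn_scal_l, parseval by (apply RealSpectral.orthogonal_rows; auto).
    unfold dot, col. rewrite HU, Nat.eqb_refl by auto. ring.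
  - intros l Hl. rewrite (quad_diag_decomp d X U x) by auto.
    apply sumn_ext; intros. rewrite (dot_comm d (col V l)). ring. }
pose proof (abel_sum_nonneg d mu (fun l => a l - x l) Hmu Partial Total) as Abel.
rewrite (sumn_ext d _ (fun l => mu l * a l - mu l * x l)), sumn_minus in Abel by (intros; ring).
unfold a in Abel. lra.
Qed.

Lemma eigvals_spectrum d A : sym d A -> spectrum d A (eigvals d A).
Proof. intros HA. unfold eigvals. apply epsilon_spec, RealSpectral.spectrum_exists, HA. Qed.

Lemma eigvals_diag_decomp d A U a : diag_decomp d A U a -> orthogonal d U ->
  (forall i, (S i < d)%nat -> a i <= a (S i)) ->
  forall l, (l < d)%nat -> eigvals d A l = a l.
Proof.
intros HA HU Ha l Hl.
destruct (eigvals_spectrum d A (diag_decomp_sym d A U a HA)) as [Hs [V [HV HAV]]].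
symmetry. apply (diag_decomp_unique d A U a V (eigvals d A)); auto using sorted_on_succ.
Qed.

Lemma orthogonal_col_nonzero d V l : orthogonal d V -> (l < d)%nat ->
  exists i, (i < d)%nat /\ col V l i <> 0.
Proof.
intros HV Hl. apply NNPP. intros Hnone.
assert (Hunit := HV l l Hl Hl). rewrite Nat.eqb_refl in Hunit.
rewrite (sumn_ext d _ (fun _ => 0)), sumn_0 in Hunit; [lra|].
intros i Hi. destruct (Req_dec (V i l) 0) as [->|Hil]; [ring|].
exfalso. apply Hnone. exists i. auto.
Qed.

Lemma eigvals_pos_PD d Z : PD d Z -> forall l, (l < d)%nat -> 0 < eigvals d Z l.
Proof.
intros [HZs HZ] l Hl. destruct (eigvals_spectrum d Z HZs) as [_ [V [HV HZV]]].
rewrite <- (quad_col d Z V (eigvals d Z) l HZV HV Hl).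
apply HZ, orthogonal_col_nonzero; auto.
Qed.

Lemma eigvals_nonneg_PSD d X : PSD d X -> forall l, (l < d)%nat -> 0 <= eigvals d X l.
Proof.
intros [HXs HX] l Hl. destruct (eigvals_spectrum d X HXs) as [_ [U [HU HXU]]].
rewrite <- (quad_col d X U (eigvals d X) l HXU HU Hl). apply Rge_le, HX.
Qed.

Lemma PD_diag_decomp d W U w : diag_decomp d W U w -> orthogonal d U ->
  (forall l, (l < d)%nat -> 0 < w l) -> PD d W.
Proof.
intros HW HU Hw. split; [exact (diag_decomp_sym d W U w HW)|].
intros v [i [Hi Hvi]]. rewrite (quad_diag_decomp d W U w) by auto.
assert (Hv : 0 < dot d v v).
{ apply sumn_pos; [intros; apply Rle_0_sqr|]. exists i. split; [auto|apply Rlt_0_sqr; auto]. }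
rewrite <- (parseval d U) in Hv by (apply RealSpectral.orthogonal_rows; auto).
apply Rlt_gt, sumn_pos.
- intros m Hm. pose proof (Rle_0_sqr (dot d v (col U m))). pose proof (Hw m Hm).
  unfold Rsqr in *. nra.
- destruct (classic (exists m, (m < d)%nat /\ dot d v (col U m) <> 0)) as [[m [Hm Hvm]]|Hnone].
  + exists m. split; [auto|]. pose proof (Rlt_0_sqr _ Hvm). pose proof (Hw m Hm).
    unfold Rsqr in *. nra.
  + rewrite (sumn_ext d _ (fun _ => 0)), sumn_0 in Hv; [lra|]. intros m Hm.
    destruct (Req_dec (dot d v (col U m)) 0) as [->|Hvm]; [ring|].
    exfalso. apply Hnone. eauto.
Qed.

(* [desc d lam (S n)] is the [(n + 1)]-th largest eigenvalue; reversing the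
   eigenbasis lists the eigenvalues decreasingly from index [0]. *)
Lemma desc_diag_decomp d X : sym d X ->
  exists U, orthogonal d U /\ diag_decomp d X U (fun n => desc d (eigvals d X) (S n)).
Proof.
intros HX. destruct (eigvals_spectrum d X HX) as [_ [U [HU HXU]]].
exists (fun i m => U i (d - S m)%nat). split.
- intros i j Hi Hj. rewrite HU by lia.
  destruct (Nat.eqb_spec (d - S i) (d - S j)), (Nat.eqb_spec i j); auto; lia.
- intros i j Hi Hj. rewrite HXU by auto.
  symmetry. exact (sumn_rev d (fun k => U i k * eigvals d X k * U j k)).
Qed.

Lemma desc_antitone d lam : sorted_on d lam ->
  forall a b, (a <= b)%nat -> (b < d)%nat -> desc d lam (S b) <= desc d lam (S a).
Proof. intros Hlam a b Hab Hb. apply Hlam; lia. Qed.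

(* If [x_(j) = 0], the [j] independent columns of [X] would lie in the span of
   [j - 1] eigenvectors. *)
Lemma rank_ge_pos d j X U x : (1 <= j)%nat -> (j <= d)%nat -> diag_decomp d X U x ->
  (forall a b, (a <= b)%nat -> (b < d)%nat -> x b <= x a) ->
  (forall l, (l < d)%nat -> 0 <= x l) -> rank_ge d X j -> 0 < x (j - 1)%nat.
Proof.
intros Hj1 Hjd HX Hx Hx0 [c [Hc Hind]]. apply Rnot_le_lt. intros Hle.
assert (Hzero : forall m, (j - 1 <= m)%nat -> (m < d)%nat -> x m = 0).
{ intros m H1 H2. assert (x m <= x (j - 1)%nat) by (apply Hx; lia).
  assert (0 <= x m) by auto. lra. }
destruct (@RealSpectral.left_kernel_exists j (j - 1) (fun t l => U (c t) l)) as [a [[t0 [Ht0 Ha0]] Hak]];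
  [lia|].
apply Ha0, (Hind a); auto. intros i Hi.
transitivity (sumn d (fun l => U i l * x l * sumn j (fun t => a t * U (c t) l))).
- rewrite (sumn_ext j _ (fun t => sumn d (fun l => U i l * x l * (a t * U (c t) l)))).
  + rewrite sumn_swap. apply sumn_ext; intros l _. now rewrite sumn_scal_l.
  + intros t Ht. rewrite HX by auto. rewrite <- sumn_scal_l. apply sumn_ext; intros; ring.
- rewrite <- (sumn_0 d). apply sumn_ext; intros l Hl.
  destruct (Nat.lt_ge_cases l (j - 1)) as [H|H].
  + rewrite Hak by auto. ring.
  + rewrite Hzero by auto. ring.
Qed.

Lemma ln_mul_bound a b : 0 < a -> 0 < b -> 1 + ln b <= a * b - ln a.
Proof.
intros Ha Hb. pose proof (exp_ineq1_le (ln (a * b))) as E.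
rewrite exp_ln, ln_mult in E by (auto || nra). lra.
Qed.

Lemma capped_weighted_sum_ge n m mu x t : (m <= n)%nat -> sorted_on n mu -> 0 < t ->
  (forall l, (l < n)%nat -> 0 <= x l <= t) -> sumn n x = INR m * t ->
  sumn n (fun l => mu l * x l) >= t * sumn m mu.
Proof.
intros Hm Hmu Ht Hx Hsum.
assert (Hc : sumn n (fun l => x l / t) = INR m).
{ unfold Rdiv. rewrite sumn_scal_r, Hsum. field. lra. }
assert (Hc01 : forall l, (l < n)%nat -> 0 <= x l / t <= 1).
{ intros l Hl. destruct (Hx l Hl). unfold Rdiv.
  assert (0 < / t) by (apply Rinv_0_lt_compat; lra).
  replace 1 with (t * / t) by (field; lra). split; nra. }
pose proof (sorted_weighted_sum_ge n m mu (fun l => x l / t) Hm Hmu Hc01 Hc) as SW.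
rewrite (sumn_ext n _ (fun l => t * (mu l * (x l / t)))), sumn_scal_l by (intros; field; lra).
apply Rmult_ge_compat_l; lra.
Qed.

Lemma threshold_log_bound d j k t mu x :
  (k < j)%nat -> (j <= d)%nat -> sorted_on d mu -> (forall l, (l < d)%nat -> 0 < mu l) ->
  (forall l, (l < d)%nat -> 0 <= x l) -> 0 < t ->
  (forall i, (i < k)%nat -> 0 < x i) ->
  (forall i, (k <= i)%nat -> (i < d)%nat -> x i <= t) ->
  sumn (d - k) (fun i => x (k + i)%nat) = INR (j - k) * t ->
  sumn d (fun l => mu l * x l) - sumn j (fun l => ln (mu l)) >=
  INR j + sumn k (fun l => ln (x l)) + INR (j - k) * ln t.
Proof.
intros Hkj Hjd Hmu Hmu0 Hx0 Ht Hxk Hxt Hsum.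
replace d with (k + (d - k))%nat by lia. rewrite sumn_add.
replace j with (k + (j - k))%nat at 1 by lia. rewrite sumn_add.
replace (INR j) with (INR k + INR (j - k)) by (rewrite <- plus_INR; f_equal; lia).
assert (Head : sumn k (fun l => mu l * x l) - sumn k (fun l => ln (mu l)) >=
               INR k + sumn k (fun l => ln (x l))).
{ rewrite <- sumn_minus, <- (Rmult_1_r (INR k)), <- sumn_const, <- sumn_plus.
  apply Rle_ge, sumn_le. intros l Hl. apply ln_mul_bound; [apply Hmu0; lia | auto]. }
assert (Tail : sumn (d - k) (fun i => mu (k + i)%nat * x (k + i)%nat) >=
               t * sumn (j - k) (fun i => mu (k + i)%nat)).
{ apply capped_weighted_sum_ge; auto; [lia | intros a b Hab Hb; apply Hmu; lia |].
  intros l Hl. split; [apply Hx0 | apply Hxt]; lia. }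
assert (TailLog : t * sumn (j - k) (fun i => mu (k + i)%nat) - sumn (j - k) (fun i => ln (mu (k + i)%nat))
                  >= INR (j - k) + INR (j - k) * ln t).
{ rewrite <- sumn_scal_l, <- sumn_minus.
  replace (INR (j - k) + INR (j - k) * ln t) with (INR (j - k) * (1 + ln t)) by ring.
  rewrite <- sumn_const.
  apply Rle_ge, sumn_le. intros l Hl. rewrite (Rmult_comm t).
  apply ln_mul_bound; [apply Hmu0; lia | auto]. }
lra.
Qed.

(** * The threshold index and the witness *)

Lemma tailavg_sum d j y k : (k < j)%nat ->
  INR (j - k) * tailavg d j y k = sumn (d - k) (fun i => y (S k + i)%nat).
Proof. intros Hkj. unfold tailavg. field. apply not_0_INR. lia. Qed.

Section Threshold.
Variables (d j : nat) (y : nat -> R).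
Hypotheses (Hj1 : (1 <= j)%nat) (Hjd : (j <= d)%nat).
Hypothesis y_anti : forall a b, (a <= b)%nat -> (b < d)%nat -> y (S b) <= y (S a).
Hypothesis y_nonneg : forall a, (a < d)%nat -> 0 <= y (S a).
Hypothesis y_pos : 0 < y (S (j - 1)).

(* The least [k] with [tailavg k >= y (S k)] satisfies [kcond]; [k = j - 1] is a candidate. *)
Lemma kcond_exists : exists k, kcond d j y k.
Proof.
set (P := fun k => (k <= j - 1)%nat /\ tailavg d j y k >= y (S k)).
assert (Pj : P (j - 1)%nat).
{ split; [lia|]. apply Rle_ge. rewrite <- (Rmult_1_l (tailavg _ _ _ _)).
  replace 1 with (INR (j - (j - 1))) by (replace (j - (j - 1))%nat with 1%nat by lia; reflexivity).
  rewrite tailavg_sum by lia. replace (d - (j - 1))%nat with (S (d - j)) by lia.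
  rewrite sumn_shift, Nat.add_0_r.
  assert (0 <= sumn (d - j) (fun i => y (S (j - 1) + S i)%nat)).
  { apply sumn_nonneg; intros i Hi. replace (S (j - 1) + S i)%nat with (S (j + i)) by lia.
    apply y_nonneg; lia. }
  lra. }
destruct (dec_inh_nat_subset_has_unique_least_element P (fun k => classic (P k)) (ex_intro _ _ Pj))
  as [k [[[Hkj Hk] Hmin] _]].
exists k. split; [exact Hkj|split; [|exact Hk]].
destruct k as [|k]; [now left|right].
assert (Hlt : tailavg d j y k < y (S k)).
{ apply Rnot_ge_lt. intros Hge. assert (Pk : P k) by (split; [lia|exact Hge]).
  specialize (Hmin k Pk). lia. }
assert (Step : INR (j - k) * tailavg d j y k = y (S k) + INR (j - S k) * tailavg d j y (S k)).
{ rewrite !tailavg_sum by lia. replace (d - k)%nat with (S (d - S k)) by lia.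
  rewrite sumn_shift, Nat.add_0_r. f_equal. apply sumn_ext; intros; f_equal; lia. }
replace (INR (j - k)) with (INR (j - S k) + 1) in Step
  by (rewrite <- S_INR; f_equal; lia).
assert (0 < INR (j - S k)) by (apply lt_0_INR; lia).
nra.
Qed.

Let k := kidx d j y.
Let t := tailavg d j y k.

Lemma kidx_spec : kcond d j y k.
Proof. unfold k, kidx. apply epsilon_spec, kcond_exists. Qed.

Lemma kidx_lt : (k < j)%nat.
Proof. destruct kidx_spec. lia. Qed.

Lemma tailavg_pos : 0 < t.
Proof.
assert (Hk := kidx_lt).
assert (INR (j - k) * t > 0).
{ unfold t. rewrite tailavg_sum by auto.
  replace (d - k)%nat with ((j - 1 - k) + S (d - j))%nat by lia.
  rewrite sumn_add, sumn_shift.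
  replace (S k + (j - 1 - k + 0))%nat with (S (j - 1)) by lia.
  assert (0 <= sumn (j - 1 - k) (fun i => y (S k + i)%nat))
    by (apply sumn_nonneg; intros i Hi; apply (y_nonneg (k + i)); lia).
  assert (0 <= sumn (d - j) (fun i => y (S k + (j - 1 - k + S i))%nat))
    by (apply sumn_nonneg; intros i Hi; apply (y_nonneg (k + (j - 1 - k + S i))); lia).
  lra. }
assert (0 < INR (j - k)) by (apply lt_0_INR; lia).
nra.
Qed.

Lemma tailavg_lt i : (i < k)%nat -> t < y (S i).
Proof.
intros Hi. pose proof kidx_lt.
destruct kidx_spec as [_ [[Hk0|Hk] _]]; [fold k in Hk0; lia|].
fold k t in Hk. replace k with (S (k - 1)) in Hk by lia.
assert (y (S (k - 1)) <= y (S i)) by (apply y_anti; lia). lra.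
Qed.

Lemma tailavg_ge i : (k <= i)%nat -> (i < d)%nat -> y (S i) <= t.
Proof.
intros Hki Hid. destruct kidx_spec as [_ [_ Hk]]. fold k t in Hk.
assert (y (S i) <= y (S k)) by (apply y_anti; lia). lra.
Qed.

End Threshold.

Lemma diag_mat_decomp d U a : diag_decomp d (diag_mat d U a) U a.
Proof. intros i j _ _. reflexivity. Qed.

Definition threshold_weights (k : nat) (t : R) (x : nat -> R) : nat -> R :=
  fun l => if Nat.ltb l k then / x l else / t.

Section Construction.
Variables (d j k : nat) (t : R) (x : nat -> R) (U X : Mat).
Hypotheses (Hkj : (k < j)%nat) (Hjd : (j <= d)%nat).
Hypotheses (HU : orthogonal d U) (HX : diag_decomp d X U x).
Hypothesis x_anti : forall a b, (a <= b)%nat -> (b < d)%nat -> x b <= x a.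
Hypothesis x_nonneg : forall l, (l < d)%nat -> 0 <= x l.
Hypothesis t_pos : 0 < t.
Hypothesis t_lt_x : forall i, (i < k)%nat -> t < x i.
Hypothesis x_le_t : forall i, (k <= i)%nat -> (i < d)%nat -> x i <= t.
Hypothesis tail_sum : sumn (d - k) (fun i => x (k + i)%nat) = INR (j - k) * t.

Let w := threshold_weights k t x.
Let W := diag_mat d U w.

Lemma threshold_weights_pos l : (l < d)%nat -> 0 < w l.
Proof.
intros Hl. unfold w, threshold_weights.
destruct (Nat.ltb_spec l k) as [Hlk|]; apply Rinv_0_lt_compat; [specialize (t_lt_x l Hlk)|]; lra.
Qed.

Lemma threshold_weights_succ i : (S i < d)%nat -> w i <= w (S i).
Proof.
intros Hi. unfold w, threshold_weights.
destruct (Nat.ltb_spec i k), (Nat.ltb_spec (S i) k); try lia.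
- assert (x (S i) <= x i) by (apply x_anti; lia).
  pose proof (t_lt_x (S i) ltac:(lia)). apply Rinv_le_contravar; lra.
- pose proof (t_lt_x i ltac:(lia)). apply Rinv_le_contravar; lra.
- lra.
Qed.

Lemma eigvals_threshold l : (l < d)%nat -> eigvals d W l = w l.
Proof.
intros Hl. apply (eigvals_diag_decomp d W U w (diag_mat_decomp d U w));
  auto using threshold_weights_succ.
Qed.

Lemma PD_threshold : PD d W.
Proof. apply (PD_diag_decomp d W U w (diag_mat_decomp d U w)); auto using threshold_weights_pos. Qed.

Lemma DeltaJ_threshold : DeltaJ d j W = sumn k (fun l => ln (x l)) + INR (j - k) * ln t.
Proof.
unfold DeltaJ.
rewrite (sumn_ext j _ (fun l => ln (w l))) by (intros; rewrite eigvals_threshold by lia; auto).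
replace j with (k + (j - k))%nat at 1 by lia. rewrite sumn_add.
rewrite (sumn_ext k _ (fun l => - ln (x l))), (sumn_ext (j - k) _ (fun _ => - ln t)).
- rewrite !sumn_opp, sumn_const. ring.
- intros l Hl. unfold w, threshold_weights.
  destruct (Nat.ltb_spec (k + l) k); [lia|]. now apply ln_Rinv.
- intros l Hl. unfold w, threshold_weights.
  destruct (Nat.ltb_spec l k); [|lia]. apply ln_Rinv. pose proof (t_lt_x l Hl). lra.
Qed.

Lemma mtr_threshold_mul : mtr d (mmul d W X) = INR j.
Proof.
rewrite (mtr_mul_diag_decomp d W U w X (diag_mat_decomp d U w)).
rewrite (sumn_ext d _ (fun l => w l * x l)) by (intros; rewrite (quad_col d X U x); auto).
replace d with (k + (d - k))%nat at 1 by lia. rewrite sumn_add.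
rewrite (sumn_ext k _ (fun _ => 1)), (sumn_ext (d - k) _ (fun l => x (k + l)%nat * / t)).
- rewrite sumn_scal_r, tail_sum, sumn_const.
  replace (INR j) with (INR k + INR (j - k)) by (rewrite <- plus_INR; f_equal; lia).
  field. lra.
- intros l Hl. unfold w, threshold_weights. destruct (Nat.ltb_spec (k + l) k); [lia|]. ring.
- intros l Hl. unfold w, threshold_weights. destruct (Nat.ltb_spec l k); [|lia].
  field. pose proof (t_lt_x l Hl). lra.
Qed.

Lemma subdiff_threshold : in_subdiff_Delta d j W (mopp X).
Proof.
intros Z HZ. destruct (eigvals_spectrum d Z (proj1 HZ)) as [Hmu [V [HV HZV]]].
assert (Trace := mtr_mul_ge d X U x Z V (eigvals d Z) HX HU
                   ltac:(intros a b Hab Hb; pose proof (x_anti a b Hab Hb); lra)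
                   HZV HV (sorted_on_succ d _ Hmu)).
assert (Dual := threshold_log_bound d j k t (eigvals d Z) x Hkj Hjd (sorted_on_succ d _ Hmu)
                  (eigvals_pos_PD d Z HZ) x_nonneg t_pos
                  ltac:(intros i Hi; pose proof (t_lt_x i Hi); lra) x_le_t tail_sum).
rewrite mtr_mul_sub_opp, mtr_threshold_mul, DeltaJ_threshold. unfold DeltaJ. lra.
Qed.

End Construction.

Theorem lemma4p5 (d j : nat) (X : Mat) :
  (1 <= j)%nat -> (j <= d)%nat -> PSD d X -> rank_ge d X j ->
  exists W : Mat, PD d W /\ in_subdiff_Delta d j W (mopp X) /\ Gamma d j X = DeltaJ d j W.
Proof.
intros Hj1 Hjd HX Hrank.
destruct (desc_diag_decomp d X (proj1 HX)) as [U [HU HXU]].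
set (y := desc d (eigvals d X)) in HXU. set (x := fun n => y (S n)) in HXU.
assert (x_anti : forall a b, (a <= b)%nat -> (b < d)%nat -> x b <= x a)
  by exact (desc_antitone d _ (sorted_on_succ d _ (proj1 (eigvals_spectrum d X (proj1 HX))))).
assert (x_nonneg : forall l, (l < d)%nat -> 0 <= x l)
  by (intros; apply eigvals_nonneg_PSD; auto; lia).
assert (x_pos : 0 < x (j - 1)%nat) by (apply (rank_ge_pos d j X U); auto).
pose proof (kidx_lt d j y Hj1 Hjd x_nonneg) as Hkj.
pose proof (tailavg_pos d j y Hj1 Hjd x_nonneg x_pos) as t_pos.
pose proof (tailavg_lt d j y Hj1 Hjd x_anti x_nonneg) as t_lt_x.
pose proof (tailavg_ge d j y Hj1 Hjd x_anti x_nonneg) as x_le_t.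
pose proof (tailavg_sum d j y (kidx d j y) Hkj) as tail_sum.
set (k := kidx d j y) in *. set (t := tailavg d j y k) in *.
exists (diag_mat d U (threshold_weights k t x)). split; [|split].
- apply (PD_threshold d k t x U); auto.
- apply (subdiff_threshold d j k t x U X); auto.
- rewrite (DeltaJ_threshold d j k t x U); auto.
Qed.
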